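(* On the square graph with vertices $0,1,2,3$ (in cyclic order) over $\mathbb{F}_2$ with exterior algebra $\Omega(\mathbb{Z}_4)$, the unique quantum metric $g=e^+\otimes e^-+e^-\otimes e^+$ has exactly four QLCs, namely for $\alpha,\beta\in\{0,1\}$: $\nabla e^+=\alpha\, e^-\otimes e^-+\alpha\beta(g+e^+\otimes e^+)$, $\nabla e^-=\beta\, e^+\otimes e^++\alpha\beta(g+e^-\otimes e^-)$, with $\sigma(e^+\otimes e^+)=(1+\alpha\beta)e^+\otimes e^++\alpha\, e^-\otimes e^-$, $\sigma(e^+\otimes e^-)=(1+\alpha\beta)e^-\otimes e^++\alpha\beta\, e^+\otimes e^-$, $\sigma(e^-\otimes e^-)=(1+\alpha\beta)e^-\otimes e^-+\beta\, e^+\otimes e^+$, $\sigma(e^-\otimes e^+)=(1+\alpha\beta)e^+\otimes e^-+\alpha\beta\, e^-\otimes e^+$. All four are flat.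
   Context: $A=\mathbb{F}_2(\mathbb{Z}_4)$; $(R_\pm f)(i)=f(i\pm1)$ mod 4. The square graph has arrows $i\to i\pm1$ mod 4, and the calculus has basis over $A$ given by $e^+=01+12+23+30$, $e^-=10+21+32+03$ (here $ij$ denotes the arrow $i\to j$), with $e^\pm f=(R_\pm f)e^\pm$ and ${\rm d} f=(R_+f+f)e^++(R_-f+f)e^-$; $\Omega^1\otimes_A\Omega^1$ is free with basis $e^a\otimes e^b$. $\Omega(\mathbb{Z}_4)$ is the exterior algebra generated by $A$ and $e^\pm$ with relations $(e^+)^2=(e^-)^2=0$, $e^+\wedge e^-+e^-\wedge e^+=0$, ${\rm d} e^\pm=0$. A bimodule connection is a linear $\nabla:\Omega^1\to\Omega^1\otimes_A\Omega^1$ with $\nabla(f\omega)={\rm d} f\otimes\omega+f\nabla\omega$ and $\nabla(\omega f)=(\nabla\omega)f+\sigma(\omega\otimes{\rm d} f)$ for a bimodule map $\sigma$; it is a QLC if $T_\nabla=\wedge\nabla-{\rm d}=0$ and $(\nabla\otimes\mathrm{id}+(\sigma\otimes\mathrm{id})(\mathrm{id}\otimes\nabla))g=0$. Flat means curvature $R_\nabla=({\rm d}\otimes\mathrm{id}-(\wedge\otimes\mathrm{id})(\mathrm{id}\otimes\nabla))\nabla$ vanishes. *)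

From HB Require Import structures.
From mathcomp Require Import all_boot all_order all_algebra.
Set Implicit Arguments. Unset Strict Implicit. Unset Printing Implicit Defensive.
Import GRing.Theory.
Local Open Scope ring_scope.

Definition F := 'F_2.
Definition Z4 := 'Z_4.

Definition A := {ffun Z4 -> F}.

(** Signs: [true] stands for '+', [false] for '-'. *)
Definition sgn := bool.

Definition Rsh (s : sgn) (f : A) : A :=
  [ffun i : Z4 => f (i + (if s then 1 else -1))].

Definition cst (c : F) : A := [ffun _ => c].

(** Omega^1: free left A-module with basis e^+, e^-; an element
    [w] represents  w(+) e^+ + w(-) e^-. *)
Definition Om1 := {ffun sgn -> A}.
(** Omega^1 (x)_A Omega^1: free left A-module with basis e^a (x) e^b;
    [X] represents  sum_{a,b} X(a,b) e^a (x) e^b. *)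
Definition Om11 := {ffun sgn * sgn -> A}.
(** Omega^1 (x)_A Omega^1 (x)_A Omega^1 with basis e^a (x) e^b (x) e^c. *)
Definition Om111 := {ffun sgn * sgn * sgn -> A}.
(** Omega^2 is free of rank one with basis Vol := e^+ /\ e^- ; an element of
    Omega^2 is represented by its coefficient in A. *)
Definition Om2 := A.
(** Omega^2 (x)_A Omega^1 with basis Vol (x) e^c. *)
Definition Om21 := {ffun sgn -> A}.

Definition e (s : sgn) : Om1 := [ffun a => if a == s then 1 else 0].

(** bimodule structure: e^a f = (R_a f) e^a *)
Definition lmul1 (f : A) (w : Om1) : Om1 := [ffun a => f * w a].
Definition rmul1 (w : Om1) (f : A) : Om1 := [ffun a => w a * Rsh a f].
Definition lmul11 (f : A) (X : Om11) : Om11 := [ffun ab => f * X ab].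
Definition rmul11 (X : Om11) (f : A) : Om11 :=
  [ffun ab => X ab * Rsh ab.1 (Rsh ab.2 f)].

Definition tens (w v : Om1) : Om11 :=
  [ffun ab => w ab.1 * Rsh ab.1 (v ab.2)].
Definition tens21 (X : Om11) (v : Om1) : Om111 :=
  [ffun abc => X (abc.1.1, abc.1.2) * Rsh abc.1.1 (Rsh abc.1.2 (v abc.2))].
Definition tens12 (w : Om1) (Y : Om11) : Om111 :=
  [ffun abc => w abc.1.1 * Rsh abc.1.1 (Y (abc.1.2, abc.2))].
(** (Vol f) (x) v  with Vol = e^+ /\ e^- *)
Definition tens2_1 (f : Om2) (v : Om1) : Om21 :=
  [ffun c => f * Rsh true (Rsh false (v c))].

Definition d0 (f : A) : Om1 := [ffun a => Rsh a f + f].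

(** wedge product Omega^1 (x) Omega^1 -> Omega^2, using
    (e^+)^2 = (e^-)^2 = 0 and e^- /\ e^+ = - e^+ /\ e^- = - Vol. *)
Definition wedge (X : Om11) : Om2 := X (true, false) - X (false, true).
Definition wedge_id (T : Om111) : Om21 :=
  [ffun c => T (true, false, c) - T (false, true, c)].

(** coefficient one-form of e^c in the right factor: X = sum_c X_c (x) e^c *)
Definition rcoef (X : Om11) (c : sgn) : Om1 := [ffun a => X (a, c)].
Definition rcoef3 (T : Om111) (c : sgn) : Om11 :=
  [ffun ab => T (ab.1, ab.2, c)].

(** exterior derivative on Omega^1: d(f e^a) = df /\ e^a  (since d e^a = 0) *)
Definition d1 (w : Om1) : Om2 := \sum_(a : sgn) wedge (tens (d0 (w a)) (e a)).

Section Connections.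
Variables (nabla : Om1 -> Om11) (sigma : Om11 -> Om11).

Definition sigma_id (T : Om111) : Om111 :=
  \sum_(c : sgn) tens21 (sigma (rcoef3 T c)) (e c).

Definition is_bimodule_map : Prop :=
  [/\ {morph sigma : X Y / X + Y},
      forall f X, sigma (lmul11 f X) = lmul11 f (sigma X)
    & forall X f, sigma (rmul11 X f) = rmul11 (sigma X) f].

Definition is_bimodule_connection : Prop :=
  [/\ {morph nabla : w v / w + v},
      forall f w, nabla (lmul1 f w) = tens (d0 f) w + lmul11 f (nabla w),
      is_bimodule_map
    & forall w f, nabla (rmul1 w f) = rmul11 (nabla w) f + sigma (tens w (d0 f))].

Definition torsion_free : Prop := forall w, wedge (nabla w) - d1 w = 0.

Definition gmetric : Om11 := tens (e true) (e false) + tens (e false) (e true).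

Definition nabla_tens (w v : Om1) : Om111 :=
  tens21 (nabla w) v + sigma_id (tens12 w (nabla v)).

Definition metric_compatible : Prop :=
  nabla_tens (e true) (e false) + nabla_tens (e false) (e true) = 0.

Definition is_QLC : Prop :=
  [/\ is_bimodule_connection, torsion_free & metric_compatible].

(** curvature R_nabla = (d (x) id - (/\ (x) id)(id (x) nabla)) nabla,
    writing X = nabla w as sum_c X_c (x) e^c (d e^c = 0). *)
Definition curvature (w : Om1) : Om21 :=
  let X := nabla w in
  \sum_(c : sgn) tens2_1 (d1 (rcoef X c)) (e c)
  - wedge_id (\sum_(c : sgn) tens12 (rcoef X c) (nabla (e c))).

Definition flat : Prop := forall w, curvature w = 0.
End Connections.

Definition sc (c : F) (X : Om11) : Om11 := lmul11 (cst c) X.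
Definition ee (a b : sgn) : Om11 := tens (e a) (e b).

Definition nabla_ab (al be : F) (s : sgn) : Om11 :=
  if s then sc al (ee false false) + sc (al * be) (gmetric + ee true true)
  else sc be (ee true true) + sc (al * be) (gmetric + ee false false).

Definition sigma_ab (al be : F) (a b : sgn) : Om11 :=
  match a, b with
  | true, true => sc (1 + al * be) (ee true true) + sc al (ee false false)
  | true, false => sc (1 + al * be) (ee false true) + sc (al * be) (ee true false)
  | false, false => sc (1 + al * be) (ee false false) + sc be (ee true true)
  | false, true => sc (1 + al * be) (ee true false) + sc (al * be) (ee false true)
  end.

From HB Require Import structures.
From mathcomp Require Import all_boot all_order all_algebra ring.
From Stdlib Require Import Btauto.
Set Implicit Arguments.
Unset Strict Implicit.
Unset Printing Implicit Defensive.
Import GRing.Theory.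
Local Open Scope ring_scope.

(* A bimodule connection on the free calculus is determined by [N a = nabla e^a].
   Testing the right Leibniz rule on delta functions forces
   [sigma (e^a (x) e^b) = e^b (x) e^a + (the part of N a of the same total shift)],
   and conversely this braiding turns every choice of [N] into a bimodule
   connection.  Torsion freeness identifies the two mixed coefficients of each
   [N a].  Metric compatibility then amounts to eight Boolean equations per
   vertex between the six remaining coefficient functions [Z_4 -> F_2]; going
   around the 4-cycle they force the mixed and diagonal coefficients to be a
   common constant [mu] and the off-diagonal ones to be constants [al], [be]
   with [mu = al be].  The four resulting connections are flat by direct
   computation. *)

Definition b2F (b : bool) : F := if b then 1 else 0.
(* The tactics below recognise [b2F] syntactically. *)
Arguments b2F : simpl never.

Lemma b2F0 : b2F false = 0. Proof. by []. Qed.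
Lemma b2F1 : b2F true = 1. Proof. by []. Qed.
Lemma b2FD x y : b2F x + b2F y = b2F (x (+) y).
Proof. by case: x; case: y; apply/val_inj. Qed.
Lemma b2FM x y : b2F x * b2F y = b2F (x && y).
Proof. by case: x; case: y; apply/val_inj. Qed.
Lemma b2FN x : - b2F x = b2F x.
Proof. by case: x; apply/val_inj. Qed.
Lemma b2F_inj : injective b2F.
Proof. by case; case. Qed.
Lemma b2F_eq1 (x : F) : b2F (x == 1) = x.
Proof. by case: x => [[|[|//]] ?]; apply/val_inj. Qed.
Lemma b2F_surj (x : F) : exists b, x = b2F b.
Proof. by exists (x == 1); rewrite b2F_eq1. Qed.

Lemma addb_xorb (x y : bool) : x (+) y = xorb x y. Proof. by case: x; case: y. Qed.
Lemma eqb_xorb (x y : bool) : (x == y) = ~~ xorb x y. Proof. by case: x; case: y. Qed.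
Lemma eq_pairE (x1 y1 x2 y2 : bool) :
  ((x1, y1) == (x2, y2)) = (x1 == x2) && (y1 == y2).
Proof. by []. Qed.

Ltac F2_btauto :=
  rewrite -?b2F0 -?b2F1 ?(b2FN, b2FD, b2FM); apply: (congr1 b2F);
  rewrite ?eq_pairE ?eqb_xorb ?addb_xorb /=; btauto.

Ltac F2_btauto_from H :=
  move: H; rewrite -?b2F0 -?b2F1 ?(b2FN, b2FD, b2FM) => /b2F_inj H;
  apply: (congr1 b2F); apply/eqP; move/eqP: H; apply/implyP;
  rewrite ?eq_pairE ?eqb_xorb ?addb_xorb implybE;
  match goal with |- is_true ?b => change (b = true) end; btauto.

Ltac eval_closed_eqs :=
  repeat match goal with
  | |- context [@eq_op ?T ?x ?y] =>
      let b := eval vm_compute in (@eq_op T x y) in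
      match b with
      | true => change (@eq_op T x y) with true
      | false => change (@eq_op T x y) with false
      end
  end; cbv beta iota.

Definition shift (a : sgn) : Z4 := if a then 1 else -1.

Lemma shiftT : shift true = 1. Proof. by []. Qed.
Lemma shiftF : shift false = -1. Proof. by []. Qed.
Lemma shiftTF (i : Z4) : i + shift true + shift false = i. Proof. exact: addrK. Qed.
Lemma shiftFT (i : Z4) : i + shift false + shift true = i. Proof. exact: addrNK. Qed.
Lemma shiftFF (i : Z4) : i + shift false + shift false = i + shift true + shift true.
Proof. by rewrite -!addrA; congr (_ + _); apply: val_inj. Qed.
Lemma shift_sum_eq a b c d :
  (shift a + shift b == shift c + shift d) = ((a == b) == (c == d)).
Proof. by case: a; case: b; case: c; case: d. Qed.

Lemma eqbTF : (true == false) = false. Proof. by []. Qed.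
Lemma eqbFT : (false == true) = false. Proof. by []. Qed.

(* Unfolding [shift] would produce copies of 1 and -1 built on other
   canonical instances, which [btauto] then takes for distinct atoms. *)
Ltac shift_simpl :=
  cbn [fst snd];
  rewrite ?shiftTF ?shiftFT ?shiftFF ?shiftT ?shiftF ?eqxx ?eqbTF ?eqbFT;
  cbn [fst snd].

Lemma Z4_cases (i : Z4) : [\/ i = 0, i = 1, i = 2 | i = 3].
Proof.
case: i => [[|[|[|[|//]]]] ?];
  [constructor 1 | constructor 2 | constructor 3 | constructor 4]; exact: val_inj.
Qed.

Lemma Z4S0 : (0 + 1 : Z4) = 1. Proof. exact: val_inj. Qed.
Lemma Z4S1 : (1 + 1 : Z4) = 2. Proof. exact: val_inj. Qed.
Lemma Z4S2 : (2 + 1 : Z4) = 3. Proof. exact: val_inj. Qed.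
Lemma Z4S3 : (3 + 1 : Z4) = 0. Proof. exact: val_inj. Qed.

Lemma Z4_cycle_monotone_const (f : Z4 -> bool) :
  (forall i, f i ==> f (i + 1)) -> forall i, f i = f 0.
Proof.
move=> f_step i; move: (f_step 0) (f_step 1) (f_step 2) (f_step 3).
rewrite Z4S0 Z4S1 Z4S2 Z4S3.
by case: (Z4_cases i) => ->; case: (f 0); case: (f 1); case: (f 2); case: (f 3).
Qed.

Definition A_of (p : Z4 -> bool) : A := [ffun k => b2F (p k)].
Definition Om1_of (p : sgn -> Z4 -> bool) : Om1 := [ffun a => A_of (p a)].
Definition Om11_of (p : sgn * sgn -> Z4 -> bool) : Om11 := [ffun ab => A_of (p ab)].

Lemma A_ofP (f : A) : exists p, f = A_of p.
Proof. by exists (fun k => f k == 1); apply/ffunP => k; rewrite ffunE b2F_eq1. Qed.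

Lemma Om1_ofP (w : Om1) : exists p, w = Om1_of p.
Proof.
exists (fun a k => w a k == 1).
by apply/ffunP => a; apply/ffunP => k; rewrite !ffunE b2F_eq1.
Qed.

Lemma Om11_ofP (X : Om11) : exists p, X = Om11_of p.
Proof.
exists (fun ab k => X ab k == 1).
by apply/ffunP => ab; apply/ffunP => k; rewrite !ffunE b2F_eq1.
Qed.

Lemma table_of (N : sgn -> Om11) : exists p, forall a, N a = Om11_of (p a).
Proof.
have [p1 N1] := Om11_ofP (N true); have [p2 N2] := Om11_ofP (N false).
by exists (fun a => if a then p1 else p2) => -[].
Qed.

Definition conn_of (N : sgn -> Om11) (w : Om1) : Om11 :=
  tens (d0 (w true)) (e true) + lmul11 (w true) (N true)
  + (tens (d0 (w false)) (e false) + lmul11 (w false) (N false)).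

Definition bimod_of (S : sgn -> sgn -> Om11) (X : Om11) : Om11 :=
  lmul11 (X (true, true)) (S true true) + lmul11 (X (true, false)) (S true false)
  + lmul11 (X (false, true)) (S false true) + lmul11 (X (false, false)) (S false false).

Section Coefficients.
Implicit Types (f g : A) (w v : Om1) (X Y : Om11) (T U : Om111).

Lemma addAE f g i : (f + g) i = f i + g i. Proof. by rewrite ffunE. Qed.
Lemma subAE f g i : (f - g) i = f i - g i. Proof. by rewrite !ffunE. Qed.
Lemma mulAE f g i : (f * g) i = f i * g i. Proof. by rewrite ffunE. Qed.
Lemma zeroAE i : (0 : A) i = 0. Proof. by rewrite ffunE. Qed.
Lemma add1E w v a i : (w + v) a i = w a i + v a i. Proof. by rewrite !ffunE. Qed.
Lemma add11E X Y ab i : (X + Y) ab i = X ab i + Y ab i. Proof. by rewrite !ffunE. Qed.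
Lemma add111E T U abc i : (T + U) abc i = T abc i + U abc i.
Proof. by rewrite !ffunE. Qed.
Lemma zero111E abc i : (0 : Om111) abc i = 0. Proof. by rewrite !ffunE. Qed.
Lemma add21E (V W : Om21) c i : (V + W) c i = V c i + W c i. Proof. by rewrite !ffunE. Qed.
Lemma sub21E (V W : Om21) c i : (V - W) c i = V c i - W c i. Proof. by rewrite !ffunE. Qed.
Lemma zero21E c i : (0 : Om21) c i = 0. Proof. by rewrite !ffunE. Qed.

Lemma RshE s f i : Rsh s f i = f (i + shift s). Proof. by rewrite ffunE. Qed.
Lemma eE s a i : e s a i = b2F (a == s).
Proof. by rewrite ffunE; case: (a == s); rewrite ffunE. Qed.
Lemma A_ofE p i : A_of p i = b2F (p i). Proof. by rewrite ffunE. Qed.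
Lemma Om1_ofE p a i : Om1_of p a i = b2F (p a i). Proof. by rewrite !ffunE. Qed.
Lemma Om11_ofE p ab i : Om11_of p ab i = b2F (p ab i). Proof. by rewrite !ffunE. Qed.

Lemma lmul1E f w a i : lmul1 f w a i = f i * w a i. Proof. by rewrite !ffunE. Qed.
Lemma rmul1E w f a i : rmul1 w f a i = w a i * f (i + shift a).
Proof. by rewrite !ffunE. Qed.
Lemma lmul11E f X ab i : lmul11 f X ab i = f i * X ab i. Proof. by rewrite !ffunE. Qed.
Lemma rmul11E X f ab i : rmul11 X f ab i = X ab i * f (i + shift ab.1 + shift ab.2).
Proof. by rewrite !ffunE. Qed.
Lemma scE c X ab i : sc c X ab i = c * X ab i. Proof. by rewrite !ffunE. Qed.

Lemma tensE w v ab i : tens w v ab i = w ab.1 i * v ab.2 (i + shift ab.1).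
Proof. by rewrite !ffunE. Qed.
Lemma tens21E X v abc i :
  tens21 X v abc i = X abc.1 i * v abc.2 (i + shift abc.1.1 + shift abc.1.2).
Proof. by rewrite !ffunE; case: abc => [[]]. Qed.
Lemma tens12E w X abc i :
  tens12 w X abc i = w abc.1.1 i * X (abc.1.2, abc.2) (i + shift abc.1.1).
Proof. by rewrite !ffunE. Qed.
Lemma tens2_1E f v c i : tens2_1 f v c i = f i * v c (i + shift true + shift false).
Proof. by rewrite !ffunE. Qed.
Lemma rcoefE X c a i : rcoef X c a i = X (a, c) i. Proof. by rewrite !ffunE. Qed.
Lemma rcoef3E T c ab i : rcoef3 T c ab i = T (ab.1, ab.2, c) i.
Proof. by rewrite !ffunE. Qed.

Lemma d0E f a i : d0 f a i = f (i + shift a) + f i. Proof. by rewrite !ffunE. Qed.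
Lemma wedgeE X i : wedge X i = X (true, false) i - X (false, true) i.
Proof. by rewrite /wedge !ffunE. Qed.
Lemma wedge_idE T c i : wedge_id T c i = T (true, false, c) i - T (false, true, c) i.
Proof. by rewrite !ffunE. Qed.
Lemma d1E w i :
  d1 w i = wedge (tens (d0 (w true)) (e true)) i + wedge (tens (d0 (w false)) (e false)) i.
Proof. by rewrite /d1 big_bool ffunE. Qed.

Lemma conn_ofE N w ab i :
  conn_of N w ab i = w ab.2 (i + shift ab.1) + w ab.2 i
                   + w true i * N true ab i + w false i * N false ab i.
Proof.
rewrite /conn_of; have [p ->] := Om1_ofP w.
have [q1 ->] := Om11_ofP (N true); have [q2 ->] := Om11_ofP (N false).
rewrite !(add11E, lmul11E, tensE, d0E, eE, Om1_ofE, Om11_ofE).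
by case: ab => [[] []]; F2_btauto.
Qed.

Lemma bimod_ofE S X ab i :
  bimod_of S X ab i = X (true, true) i * S true true ab i
    + X (true, false) i * S true false ab i
    + X (false, true) i * S false true ab i
    + X (false, false) i * S false false ab i.
Proof. by rewrite !ffunE. Qed.

End Coefficients.

Hint Rewrite addAE subAE mulAE zeroAE add1E add11E add111E zero111E add21E sub21E
  zero21E RshE eE A_ofE Om1_ofE Om11_ofE lmul1E rmul1E lmul11E rmul11E scE tensE
  tens21E tens12E tens2_1E rcoefE rcoef3E d0E wedgeE wedge_idE d1E conn_ofE
  bimod_ofE : coefE.

Ltac Om11_ext := apply/ffunP => -[[] []]; apply/ffunP => ?; autorewrite with coefE.

Lemma sumr_bool (V : nmodType) (G : bool -> V) : \sum_c G c = G true + G false.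
Proof. by rewrite big_bool. Qed.

Lemma Om1_decomp (w : Om1) : w = lmul1 (w true) (e true) + lmul1 (w false) (e false).
Proof.
have [p ->] := Om1_ofP w.
by apply/ffunP => -[]; apply/ffunP => i; autorewrite with coefE; F2_btauto.
Qed.

Lemma Om11_decomp (X : Om11) :
  X = lmul11 (X (true, true)) (ee true true) + lmul11 (X (true, false)) (ee true false)
    + lmul11 (X (false, true)) (ee false true) + lmul11 (X (false, false)) (ee false false).
Proof. by have [p ->] := Om11_ofP X; rewrite /ee; Om11_ext; F2_btauto. Qed.

Section BasisValues.
Variables (nabla : Om1 -> Om11) (sigma : Om11 -> Om11).

Lemma bimodule_mapE :
  is_bimodule_map sigma -> sigma =1 bimod_of (fun a b => sigma (ee a b)).
Proof. by case=> sigmaD sigma_lmul _ X; rewrite {1}(Om11_decomp X) !sigmaD !sigma_lmul. Qed.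

Lemma bimodule_connectionE :
  is_bimodule_connection nabla sigma -> nabla =1 conn_of (fun a => nabla (e a)).
Proof. by case=> nablaD nabla_lmul _ _ w; rewrite {1}(Om1_decomp w) nablaD !nabla_lmul. Qed.

End BasisValues.

Lemma eq_conn_of N1 N2 : (forall a, N1 a = N2 a) -> conn_of N1 =1 conn_of N2.
Proof. by move=> eqN w; rewrite /conn_of !eqN. Qed.

Lemma eq_bimod_of S1 S2 : (forall a b, S1 a b = S2 a b) -> bimod_of S1 =1 bimod_of S2.
Proof. by move=> eqS X; rewrite /bimod_of !eqS. Qed.

Definition degree_preserving (S : sgn -> sgn -> Om11) : Prop :=
  forall a b cd, shift cd.1 + shift cd.2 != shift a + shift b -> S a b cd = 0.

Section BimoduleMaps.
Variable S : sgn -> sgn -> Om11.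

Lemma bimod_ofD : {morph bimod_of S : X Y / X + Y}.
Proof. by move=> X Y; apply/ffunP => cd; apply/ffunP => i; autorewrite with coefE; ring. Qed.

Lemma bimod_of_lmul f X : bimod_of S (lmul11 f X) = lmul11 f (bimod_of S X).
Proof. by apply/ffunP => cd; apply/ffunP => i; autorewrite with coefE; ring. Qed.

Lemma bimod_of_rmul : degree_preserving S ->
  forall X f, bimod_of S (rmul11 X f) = rmul11 (bimod_of S X) f.
Proof.
move=> S_deg X f; apply/ffunP => cd; apply/ffunP => i; autorewrite with coefE.
have term a b : X (a, b) i * f (i + shift a + shift b) * S a b cd i
              = X (a, b) i * S a b cd i * f (i + shift cd.1 + shift cd.2).
  have [same | /S_deg ->] := eqVneq (shift cd.1 + shift cd.2) (shift a + shift b).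
    by rewrite -!addrA same mulrAC.
  by rewrite zeroAE !(mulr0, mul0r).
by rewrite !term !mulrDl.
Qed.

Lemma bimod_of_bimodule_map : degree_preserving S -> is_bimodule_map (bimod_of S).
Proof.
by move=> S_deg; split; [exact: bimod_ofD | exact: bimod_of_lmul | exact: bimod_of_rmul].
Qed.

Lemma bimod_of_ee a b : bimod_of S (ee a b) = S a b.
Proof.
apply/ffunP => cd; apply/ffunP => i; rewrite /ee; autorewrite with coefE.
by case: a; case: b; shift_simpl; rewrite ?b2F0 ?b2F1; ring.
Qed.

End BimoduleMaps.

(* The only [sigma] compatible with the right Leibniz rule for [nabla e^a = N a]. *)
Definition braiding (N : sgn -> Om11) (a b : sgn) : Om11 :=
  ee b a + [ffun cd => if shift cd.1 + shift cd.2 == shift a + shift b then N a cd else 0].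

Lemma braidingE N a b cd i :
  braiding N a b cd i
  = b2F (cd == (b, a)) + (if (cd.1 == cd.2) == (a == b) then N a cd i else 0).
Proof.
rewrite /braiding /ee add11E tensE !eE ffunE shift_sum_eq.
by case: ifP; rewrite ?zeroAE b2FM.
Qed.
Hint Rewrite braidingE : coefE.

Lemma eq_braiding N1 N2 : (forall a, N1 a = N2 a) -> forall a b, braiding N1 a b = braiding N2 a b.
Proof. by move=> eqN a b; rewrite /braiding eqN. Qed.

Lemma braiding_degree_preserving N : degree_preserving (braiding N).
Proof.
move=> a b [c d]; rewrite /= shift_sum_eq => ne_deg; apply/ffunP => i.
rewrite braidingE /= (negbTE ne_deg) !zeroAE addr0.
by rewrite -b2F0; congr b2F; apply: contraNF ne_deg => /eqP[-> ->]; rewrite [b == a]eq_sym.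
Qed.

Section BraidedConnection.
Variable N : sgn -> Om11.

Lemma conn_ofD : {morph conn_of N : w v / w + v}.
Proof. by move=> w v; Om11_ext; ring. Qed.

Lemma conn_of_lmul f w : conn_of N (lmul1 f w) = tens (d0 f) w + lmul11 f (conn_of N w).
Proof.
have [p Np] := table_of N; have [q ->] := A_ofP f; have [r ->] := Om1_ofP w.
by Om11_ext; rewrite !Np; autorewrite with coefE; F2_btauto.
Qed.

Lemma conn_of_rmul w f :
  conn_of N (rmul1 w f) = rmul11 (conn_of N w) f + bimod_of (braiding N) (tens w (d0 f)).
Proof.
have [p Np] := table_of N; have [q ->] := A_ofP f; have [r ->] := Om1_ofP w.
apply/ffunP => ab; apply/ffunP => i; autorewrite with coefE; rewrite !Np.
by autorewrite with coefE; case: ab => [[] []]; shift_simpl; F2_btauto.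
Qed.

Lemma conn_of_bimodule_connection :
  is_bimodule_connection (conn_of N) (bimod_of (braiding N)).
Proof.
split; [exact: conn_ofD | exact: conn_of_lmul | | exact: conn_of_rmul].
exact/bimod_of_bimodule_map/braiding_degree_preserving.
Qed.

Lemma conn_of_e s : conn_of N (e s) = N s.
Proof.
have [p Np] := table_of N.
by Om11_ext; rewrite !Np; autorewrite with coefE; case: s; F2_btauto.
Qed.

End BraidedConnection.

Definition delta (j : Z4) : A := [ffun k => b2F (k == j)].

Lemma deltaE j k : delta j k = b2F (k == j). Proof. by rewrite ffunE. Qed.
Hint Rewrite deltaE : coefE.

Lemma rmul1_e a f : rmul1 (e a) f = lmul1 (Rsh a f) (e a).
Proof.
have [q ->] := A_ofP f.
by apply/ffunP => b; apply/ffunP => i; autorewrite with coefE; case: a; case: b; F2_btauto.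
Qed.

Lemma right_Leibniz_e nabla sigma : is_bimodule_connection nabla sigma -> forall a f,
  tens (d0 (Rsh a f)) (e a) + lmul11 (Rsh a f) (nabla (e a))
  = rmul11 (nabla (e a)) f + sigma (tens (e a) (d0 f)).
Proof. by case=> _ nabla_lmul _ nabla_rmul a f; rewrite -nabla_rmul rmul1_e nabla_lmul. Qed.

Lemma braiding_of_right_Leibniz (N : sgn -> Om11) (S : sgn -> sgn -> Om11) :
  (forall a f, tens (d0 (Rsh a f)) (e a) + lmul11 (Rsh a f) (N a)
               = rmul11 (N a) f + bimod_of S (tens (e a) (d0 f))) ->
  forall a b, S a b = braiding N a b.
Proof.
move=> Leibniz a b; apply/ffunP => cd; apply/ffunP => i.
(* Only the [b]-th term of [d f] survives at [i] for [f] the delta function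
   at [i + shift a + shift b]. *)
have := congr1 (fun X : Om11 => X cd i) (Leibniz a (delta (i + shift a + shift b))).
have [p Np] := table_of N; have [q Sq] : exists q, forall a b, S a b = Om11_of (q a b).
  have [q1 S1] := table_of (S true); have [q2 S2] := table_of (S false).
  by exists (fun a => if a then q1 else q2) => -[].
autorewrite with coefE; rewrite !Np !Sq; autorewrite with coefE.
case: (Z4_cases i) => ->; case: a; case: b; case: cd => [[] []];
  eval_closed_eqs => H; F2_btauto_from H.
Qed.

Lemma bimodule_connection_braiding nabla sigma : is_bimodule_connection nabla sigma ->
  forall a b, sigma (ee a b) = braiding (fun a => nabla (e a)) a b.
Proof.
move=> conn; have [_ _ sigma_bimod _] := conn.
apply: braiding_of_right_Leibniz => a f.
by rewrite -(bimodule_mapE sigma_bimod) (right_Leibniz_e conn).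
Qed.

Definition mixed_symmetric (N : sgn -> Om11) : Prop :=
  forall a, N a (false, true) = N a (true, false).

Lemma torsion_free_mixed_symmetric nabla :
  torsion_free nabla -> mixed_symmetric (fun a => nabla (e a)).
Proof.
move=> T a; have /eqP := T (e a).
have -> : d1 (e a) = 0 by apply/ffunP => i; autorewrite with coefE; case: a; F2_btauto.
by rewrite subr0 subr_eq0 => /eqP.
Qed.

Lemma symmetric_table N : mixed_symmetric N ->
  exists2 p, forall a, N a = Om11_of (p a)
           & forall a i, p a (false, true) i = p a (true, false) i.
Proof.
move=> N_sym; have [p Np] := table_of N; exists p => // a i.
by apply: b2F_inj; rewrite -!Om11_ofE -!Np N_sym.
Qed.

Lemma conn_of_torsion_free N : mixed_symmetric N -> torsion_free (conn_of N).
Proof.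
case/symmetric_table=> p Np p_sym w; have [q ->] := Om1_ofP w.
apply/ffunP => i; autorewrite with coefE; rewrite !Np; autorewrite with coefE.
by rewrite !p_sym; F2_btauto.
Qed.

Definition braiding_coef (p : sgn -> sgn * sgn -> Z4 -> bool) (a b : sgn) cd i : bool :=
  (cd == (b, a)) (+) (p a cd i && ((cd.1 == cd.2) == (a == b))).

Lemma braiding_of_coef p a b :
  braiding (fun a => Om11_of (p a)) a b = Om11_of (braiding_coef p a b).
Proof.
apply/ffunP => -[c d]; apply/ffunP => i; rewrite braidingE !Om11_ofE /braiding_coef /=.
by case: ((c == d) == (a == b)); rewrite ?zeroAE; F2_btauto.
Qed.

(* Coefficients of [nabla e^+] (suffix [p]) and [nabla e^-] (suffix [m]):
   [P] on [e^a (x) e^a], [Q] on [e^-a (x) e^-a], [M] on [e^+ (x) e^-]. *)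
Local Notation Pp p i := (p true (true, true) i).
Local Notation Qp p i := (p true (false, false) i).
Local Notation Mp p i := (p true (true, false) i).
Local Notation Pm p i := (p false (false, false) i).
Local Notation Qm p i := (p false (true, true) i).
Local Notation Mm p i := (p false (true, false) i).

Definition metric_coef (p : sgn -> sgn * sgn -> Z4 -> bool) (abc : sgn * sgn * sgn) i :=
  match abc with
  | (true, true, true) => Qm p i (+) (Qm p (i + 1) && ~~ Pp p i) (+) (Mp p (i - 1) && Qm p i)
  | (false, false, true) => Pm p i (+) (Qm p (i + 1) && Qp p i) (+) (Mp p (i - 1) && ~~ Pm p i)
  | (true, false, true) => Mm p i (+) (Mm p (i + 1) && Mp p i) (+) (Pp p (i - 1) && ~~ Mm p i)
  | (false, true, true) => Mm p i (+) (Mm p (i + 1) && ~~ Mp p i) (+) (Pp p (i - 1) && Mm p i)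
  | (true, true, false) => Pp p i (+) (Mm p (i + 1) && ~~ Pp p i) (+) (Qp p (i - 1) && Qm p i)
  | (false, false, false) => Qp p i (+) (Mm p (i + 1) && Qp p i) (+) (Qp p (i - 1) && ~~ Pm p i)
  | (true, false, false) => Mp p i (+) (Mp p (i - 1) && ~~ Mm p i) (+) (Pm p (i + 1) && Mp p i)
  | (false, true, false) => Mp p i (+) (Mp p (i - 1) && Mm p i) (+) (Pm p (i + 1) && ~~ Mp p i)
  end.

Definition metric_tensor (N : sgn -> Om11) (sigma : Om11 -> Om11) : Om111 :=
  tens21 (N true) (e false) + sigma_id sigma (tens12 (e true) (N false))
  + (tens21 (N false) (e true) + sigma_id sigma (tens12 (e false) (N true))).

Lemma sigma_idE sigma T : sigma_id sigma T
  = tens21 (sigma (rcoef3 T true)) (e true) + tens21 (sigma (rcoef3 T false)) (e false).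
Proof. by rewrite /sigma_id sumr_bool. Qed.

Lemma metric_tensorE p abc i : (forall a i, p a (false, true) i = p a (true, false) i) ->
  metric_tensor (fun a => Om11_of (p a)) (bimod_of (fun a b => Om11_of (braiding_coef p a b)))
    abc i
  = b2F (metric_coef p abc i).
Proof.
move=> p_sym; rewrite /metric_tensor !sigma_idE; autorewrite with coefE.
case: abc => [[[] []] []]; shift_simpl; rewrite /metric_coef /braiding_coef !p_sym;
  F2_btauto.
Qed.

Lemma metric_compatible_coefP nabla sigma p :
  (forall a i, p a (false, true) i = p a (true, false) i) ->
  (forall a, nabla (e a) = Om11_of (p a)) ->
  sigma =1 bimod_of (braiding (fun a => Om11_of (p a))) ->
  metric_compatible nabla sigma <-> forall abc i, metric_coef p abc i = false.
Proof.
move=> p_sym Np sigmaE.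
have -> : metric_compatible nabla sigma <-> metric_tensor (fun a => Om11_of (p a))
    (bimod_of (fun a b => Om11_of (braiding_coef p a b))) = 0.
  rewrite /metric_compatible /nabla_tens /metric_tensor !sigma_idE !Np !sigmaE.
  by rewrite !(eq_bimod_of (braiding_of_coef p)).
split=> [M abc i | M].
  by apply: b2F_inj; rewrite -metric_tensorE // M zero111E.
by apply/ffunP => abc; apply/ffunP => i; rewrite metric_tensorE // M zero111E.
Qed.

Definition nabla_ab_coef (al be : bool) (a : sgn) (bc : sgn * sgn) : bool :=
  match a, bc with
  | true, (false, false) => al
  | false, (true, true) => be
  | _, _ => al && be
  end.

Section MetricSolutions.
Variable p : sgn -> sgn * sgn -> Z4 -> bool.
Hypothesis p_sym : forall a i, p a (false, true) i = p a (true, false) i.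
Hypothesis p_metric : forall abc i, metric_coef p abc i = false.

Lemma mixed_coef_eq i : Mp p i = Mm p i.
Proof.
move: (p_metric (true, false, true) i) (p_metric (false, true, false) i) => /=.
by case: (Mp p i); case: (Mm p i); case: (Mm p (i + 1)); case: (Mp p (i - 1));
  case: (Pp p (i - 1)); case: (Pm p (i + 1)).
Qed.

Lemma mixed_coef_const : exists mu, (forall i, Mp p i = mu) /\ (forall i, Mm p i = mu).
Proof.
exists (Mm p 0); suff Mm_const i : Mm p i = Mm p 0 by split=> i; rewrite ?mixed_coef_eq.
apply: Z4_cycle_monotone_const => j; move: (p_metric (true, false, true) j) => /=.
by case: (Mm p j); case: (Mm p (j + 1)); case: (Mp p j); case: (Pp p (j - 1)).
Qed.

Lemma diag_mixed_coef_const : exists mu,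
  [/\ forall i, Pp p i = mu, forall i, Pm p i = mu,
      forall i, Mp p i = mu & forall i, Mm p i = mu].
Proof.
have [mu [Mp_mu Mm_mu]] := mixed_coef_const; exists mu; split=> // i.
- move: (p_metric (true, false, true) (i + 1)) (p_metric (false, true, true) (i + 1)) => /=.
  by rewrite addrK !Mp_mu !Mm_mu; case: (Pp p i); case: mu Mp_mu Mm_mu.
- move: (p_metric (true, false, false) (i - 1)) (p_metric (false, true, false) (i - 1)) => /=.
  by rewrite addrNK !Mp_mu !Mm_mu; case: (Pm p i); case: mu Mp_mu Mm_mu.
Qed.

Lemma metric_coef_solution :
  exists al be, forall a bc i, p a bc i = nabla_ab_coef al be a bc.
Proof.
have [mu [Pp_mu Pm_mu Mp_mu Mm_mu]] := diag_mixed_coef_const.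
have Qm_Qp i : mu = Qm p (i + 1) && Qp p i.
  move: (p_metric (false, false, true) i) => /=; rewrite Pm_mu Mp_mu.
  by case: (Qm p (i + 1)); case: (Qp p i); case: mu {Pp_mu Pm_mu Mp_mu Mm_mu}.
suff [al [be [mu_al_be Qp_al Qm_be]]] : exists al be,
    [/\ mu = al && be, forall i, Qp p i = al & forall i, Qm p i = be].
  exists al, be => -[] [[] []] i //=; rewrite ?p_sym ?Pp_mu ?Pm_mu ?Mp_mu ?Mm_mu //.
case: mu Pp_mu Pm_mu Mp_mu Mm_mu Qm_Qp => Pp_mu Pm_mu Mp_mu Mm_mu Qm_Qp.
- exists true, true; split=> // i; first by case/esym/andP: (Qm_Qp i).
  by case/esym/andP: (Qm_Qp (i - 1)); rewrite addrNK.
- have Qp_const : forall i, Qp p i = Qp p 0.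
    apply: Z4_cycle_monotone_const => j; move: (p_metric (false, false, false) (j + 1)) => /=.
    by rewrite addrK Pm_mu Mm_mu; case: (Qp p j); case: (Qp p (j + 1)).
  have Qm_const : forall i, Qm p i = Qm p 0.
    apply: Z4_cycle_monotone_const => j; move: (p_metric (true, true, true) j) => /=.
    by rewrite Pp_mu Mp_mu; case: (Qm p j); case: (Qm p (j + 1)).
  exists (Qp p 0), (Qm p 0); split=> //.
  by rewrite [Qp p 0 && _]andbC -(Qm_const (0 + 1)) -Qm_Qp.
Qed.

End MetricSolutions.

Lemma nabla_abE al be a bc i : nabla_ab (b2F al) (b2F be) a bc i = b2F (nabla_ab_coef al be a bc).
Proof.
rewrite /nabla_ab /gmetric /ee; case: a; autorewrite with coefE;
  by case: bc => [[] []]; F2_btauto.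
Qed.
Hint Rewrite nabla_abE : coefE.

Lemma nabla_ab_mixed_symmetric al be : mixed_symmetric (nabla_ab al be).
Proof.
have [x ->] := b2F_surj al; have [y ->] := b2F_surj be.
by move=> a; apply/ffunP => i; rewrite !nabla_abE; case: a.
Qed.

Lemma sigma_ab_braiding al be a b : sigma_ab al be a b = braiding (nabla_ab al be) a b.
Proof.
have [x ->] := b2F_surj al; have [y ->] := b2F_surj be.
apply/ffunP => cd; apply/ffunP => i; rewrite braidingE nabla_abE.
case: a; case: b; rewrite /sigma_ab /ee; autorewrite with coefE;
  by case: cd => [[] []]; shift_simpl; F2_btauto.
Qed.

Lemma conn_of_nabla_ab_QLC al be :
  is_QLC (conn_of (nabla_ab al be)) (bimod_of (braiding (nabla_ab al be))).
Proof.
split; [exact: conn_of_bimodule_connection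
       | exact/conn_of_torsion_free/nabla_ab_mixed_symmetric | ].
have [x ->] := b2F_surj al; have [y ->] := b2F_surj be.
pose p a bc (i : Z4) := nabla_ab_coef x y a bc.
have Np a : nabla_ab (b2F x) (b2F y) a = Om11_of (p a).
  by apply/ffunP => bc; apply/ffunP => i; rewrite nabla_abE Om11_ofE.
apply/(@metric_compatible_coefP _ _ p).
- by case.
- by move=> a; rewrite conn_of_e Np.
- exact: eq_bimod_of (eq_braiding Np).
- by clear Np; subst p; case: x; case: y => -[[[] []] []].
Qed.

Lemma QLC_classification nabla sigma : is_QLC nabla sigma ->
  exists al be, (forall s, nabla (e s) = nabla_ab al be s)
             /\ (forall a b, sigma (ee a b) = sigma_ab al be a b).
Proof.
case=> conn /torsion_free_mixed_symmetric/symmetric_table[p Np p_sym] metric.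
have [_ _ sigma_bimod _] := conn.
have sigma_braiding a b : sigma (ee a b) = braiding (fun a => Om11_of (p a)) a b.
  by rewrite (bimodule_connection_braiding conn) (eq_braiding Np).
have sigmaE : sigma =1 bimod_of (braiding (fun a => Om11_of (p a))).
  by move=> X; rewrite (bimodule_mapE sigma_bimod) (eq_bimod_of sigma_braiding).
have p_metric := (metric_compatible_coefP p_sym Np sigmaE).1 metric.
have [al [be p_ab]] := metric_coef_solution p_sym p_metric.
have Np_ab a : Om11_of (p a) = nabla_ab (b2F al) (b2F be) a.
  by apply/ffunP => bc; apply/ffunP => i; rewrite Om11_ofE nabla_abE p_ab.
exists (b2F al), (b2F be); split=> [s | a b]; first by rewrite Np Np_ab.
by rewrite sigma_braiding sigma_ab_braiding (eq_braiding Np_ab).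
Qed.

Lemma curvatureE nabla w : curvature nabla w
  = tens2_1 (d1 (rcoef (nabla w) true)) (e true) + tens2_1 (d1 (rcoef (nabla w) false)) (e false)
    - wedge_id (tens12 (rcoef (nabla w) true) (nabla (e true))
                + tens12 (rcoef (nabla w) false) (nabla (e false))).
Proof. by rewrite /curvature 2!sumr_bool. Qed.

Lemma eq_flat nabla1 nabla2 : nabla1 =1 nabla2 -> flat nabla1 -> flat nabla2.
Proof. by move=> eq_nabla flat1 w; rewrite curvatureE -!eq_nabla -curvatureE. Qed.

Lemma conn_of_nabla_ab_flat al be : flat (conn_of (nabla_ab al be)).
Proof.
have [x ->] := b2F_surj al; have [y ->] := b2F_surj be.
move=> w; rewrite curvatureE !conn_of_e; have [q ->] := Om1_ofP w.
apply/ffunP => c; apply/ffunP => i; autorewrite with coefE.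
by case: c; shift_simpl; F2_btauto.
Qed.

Theorem proposition4p6 :
  (forall (nabla : Om1 -> Om11) (sigma : Om11 -> Om11),
      is_QLC nabla sigma ->
      (exists al be : F,
          (forall s, nabla (e s) = nabla_ab al be s) /\
          (forall a b, sigma (ee a b) = sigma_ab al be a b))
      /\ flat nabla)
  /\
  (forall al be : F,
      exists (nabla : Om1 -> Om11) (sigma : Om11 -> Om11),
        is_QLC nabla sigma /\ flat nabla /\
        (forall s, nabla (e s) = nabla_ab al be s) /\
        (forall a b, sigma (ee a b) = sigma_ab al be a b)).
Proof.
split=> [nabla sigma QLC | al be].
  have [al [be [nablaE sigmaE]]] := QLC_classification QLC.
  split; first by exists al, be.
  apply: eq_flat (conn_of_nabla_ab_flat al be) => w.
  have [conn _ _] := QLC.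
  by rewrite (bimodule_connectionE conn) (eq_conn_of nablaE).
exists (conn_of (nabla_ab al be)), (bimod_of (braiding (nabla_ab al be))).
split; first exact: conn_of_nabla_ab_QLC.
split; first exact: conn_of_nabla_ab_flat.
by split=> [s | a b]; rewrite ?conn_of_e ?bimod_of_ee ?sigma_ab_braiding.
Qed.
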